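(* Let $\beta=(b_1,\ldots,b_m)$ be a composition of $d$. Then \[ \sum_{w\in\mathcal{L}(S_\beta,\nu)}q^{\mathrm{maj}(w)}=\sum_{D\in\mathcal{E}_d(r_1,\ldots,r_{m-1})}q^{\mathrm{maj}(D)-2(r_1+\cdots+r_{m-1})}, \] where for $m=1$ the sum $r_1+\cdots+r_{m-1}$ is $0$.
   Context: Put $r_0=0$, $r_i=b_1+\cdots+b_i$. The poset $S_\beta$ is $\bigcup_{l=1}^m\{(i,j)\in\mathbb{N}^2: l\le i\le l+1,\ r_{l-1}+1\le j\le r_l\}$ with $(i_1,j_1)\le(i_2,j_2)$ iff $i_1\le i_2$ and $j_1\le j_2$, with natural labeling $\nu(i,j)=r_{l-1}+j+(i-l)b_l$ where $r_{l-1}+1\le j\le r_l$. A linear extension is an order-preserving bijection $\sigma:S_\beta\to\{1,\ldots,2d\}$, identified with the permutation $w=\nu(\sigma^{-1}(1))\cdots\nu(\sigma^{-1}(2d))$; $\mathcal{L}(S_\beta,\nu)$ is the set of these permutations, and $\mathrm{maj}(w)=\sum\{k: w_k>w_{k+1}\}$. A Dyck path from $(0,0)$ to $(2d,0)$ is a lattice path with steps $(1,1),(1,-1)$ never going below the $x$-axis; a valley is an interior point preceded by a $(1,-1)$ step and followed by a $(1,1)$ step, a return is a valley on the $x$-axis, and $\mathrm{maj}(D)$ is the sum of the $x$-coordinates of all valleys of $D$. $\mathcal{E}_d(x_1,\ldots,x_{r})$ is the set of Dyck paths from $(0,0)$ to $(2d,0)$ having returns at $(2x_1,0),\ldots,(2x_r,0)$,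 these being exactly the marked returns (for $r=0$: Dyck paths with no marked returns). *)

From mathcomp Require Import all_boot all_order all_algebra.
Set Implicit Arguments. Unset Strict Implicit. Unset Printing Implicit Defensive.

Definition rpart (beta : seq nat) (i : nat) : nat := sumn (take i beta).

(* b_l (1-indexed) *)
Definition bpart (beta : seq nat) (l : nat) : nat := nth 0 beta l.-1.

Definition inS (beta : seq nat) (c : nat * nat) : bool :=
  has (fun l => [&& l <= c.1, c.1 <= l.+1,
                    rpart beta l.-1 < c.2 & c.2 <= rpart beta l])
      (iota 1 (size beta)).

Definition leS (c1 c2 : nat * nat) : bool := (c1.1 <= c2.1) && (c1.2 <= c2.2).

(* all cells of S_beta (every cell has 1 <= i <= m+1 and 1 <= j <= d) *)
Definition cellsS (beta : seq nat) : seq (nat * nat) :=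
  [seq c <- [seq (i, j) | i <- iota 1 (size beta).+1, j <- iota 1 (sumn beta)]
   | inS beta c].

Definition blk (beta : seq nat) (j : nat) : nat :=
  find (fun l => j <= rpart beta l) (iota 0 (size beta).+1).

Definition nu (beta : seq nat) (c : nat * nat) : nat :=
  let l := blk beta c.2 in
  rpart beta l.-1 + c.2 + (c.1 - l) * bpart beta l.

(* A linear extension sigma : S_beta -> {1,...,2d} is encoded by the listing
   s = [sigma^{-1}(1); ...; sigma^{-1}(2d)]: s is a permutation of the cells of
   S_beta, and sigma (= 1 + position in s) is order preserving. *)
Definition is_linext (beta : seq nat) (s : seq (nat * nat)) : bool :=
  all (fun a => all (fun b => leS (nth (0, 0) s a) (nth (0, 0) s b) ==> (a <= b))
                    (iota 0 (size s)))
      (iota 0 (size s)).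

(* L(S_beta, nu): the set of permutations w = nu(sigma^{-1}(1)) ... nu(sigma^{-1}(2d)) *)
Definition linext_perms (beta : seq nat) : seq (seq nat) :=
  undup [seq map (nu beta) s | s <- permutations (cellsS beta) & is_linext beta s].

Definition maj (w : seq nat) : nat :=
  \sum_(1 <= k < size w | nth 0 w k.-1 > nth 0 w k) k.

(* A path is a sequence of steps: true = (1,1), false = (1,-1).
   The point with x-coordinate k is reached after the first k steps; its
   height is (#up - #down) among them. *)

Definition nups (p : seq bool) (k : nat) : nat := count id (take k p).
Definition ndowns (p : seq bool) (k : nat) : nat := count negb (take k p).

Definition dyck (d : nat) (p : seq bool) : bool :=
  [&& size p == 2 * d,
      all (fun k => ndowns p k <= nups p k) (iota 0 (2 * d).+1)
    & nups p (2 * d) == ndowns p (2 * d)].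

Definition valley (p : seq bool) (k : nat) : bool :=
  [&& 0 < k, k < size p, ~~ nth true p k.-1 & nth false p k].

Definition is_return (p : seq bool) (k : nat) : bool :=
  valley p k && (nups p k == ndowns p k).

Definition majD (p : seq bool) : nat :=
  \sum_(0 <= k < size p | valley p k) k.

Definition inEd (d : nat) (xs : seq nat) (p : seq bool) : bool :=
  dyck d p && all (fun x => is_return p (2 * x)) xs.

Definition rlist (beta : seq nat) : seq nat :=
  [seq rpart beta i | i <- iota 1 (size beta).-1].

From mathcomp Require Import all_boot all_order all_algebra.
From mathcomp Require Import zify.
Import GRing.Theory.
Set Implicit Arguments. Unset Strict Implicit. Unset Printing Implicit Defensive.

(* Column j of S_beta consists of exactly two cells, top_cell j = (l, j) and
   bot_cell j = (l + 1, j), where l = blk j is the block containing j.  Recording,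
   along a linear extension, whether each cell is a top or a bottom cell gives a
   Dyck path: both rows are listed in column order, top j comes before bot j, and
   bot r_l comes before top (r_l + 1), which forces a return at 2 r_l.  Conversely
   the k-th step of a path in E_d(r_1, ..., r_{m-1}) determines the k-th cell, so
   this is a bijection.  The natural labeling orders cells by block, then row, then
   column; hence the labelled word descends exactly at the valleys of the path other
   than the marked returns 2 r_l, and maj(w) = maj(D) - 2 (r_1 + ... + r_{m-1}). *)

Section PartialSums.
Variable beta : seq nat.

Lemma rpart0 : rpart beta 0 = 0.
Proof. by rewrite /rpart take0. Qed.

Lemma rpartS l : rpart beta l.+1 = rpart beta l + nth 0 beta l.
Proof.
rewrite /rpart; elim: beta l => [|b s IHs] [|l] /=; rewrite ?take0 ?nth_nil ?addn0 //.
by rewrite IHs addnA.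
Qed.

Lemma rpart_mono : {homo rpart beta : l l' / l <= l'}.
Proof.
move=> l l' /subnKC <-; elim: (l' - l) => [|k IHk]; first by rewrite addn0.
by rewrite addnS rpartS (leq_trans IHk) ?leq_addr.
Qed.

Lemma rpart_oversize l : size beta <= l -> rpart beta l = sumn beta.
Proof. by move=> le_size_l; rewrite /rpart take_oversize. Qed.

Lemma rpart_lt l l' : all (fun b => 0 < b) beta -> l < l' -> l' <= size beta ->
  rpart beta l < rpart beta l'.
Proof.
move=> pos_beta lt_ll' le_l'_size; apply: leq_trans (rpart_mono lt_ll').
rewrite rpartS -[X in X < _]addn0 ltn_add2l.
by apply: (all_nthP 0 pos_beta); apply: leq_trans le_l'_size.
Qed.

Lemma uniq_rlist : all (fun b => 0 < b) beta -> uniq (rlist beta).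
Proof.
move=> pos_beta; rewrite map_inj_in_uniq ?iota_uniq // => l l' /[!mem_iota] l_range l'_range e_R.
apply/anti_leq/andP; split; rewrite leqNgt; apply/negP => lt.
- have : rpart beta l' < rpart beta l by apply: rpart_lt => //; lia.
  by rewrite e_R ltnn.
- have : rpart beta l < rpart beta l' by apply: rpart_lt => //; lia.
  by rewrite e_R ltnn.
Qed.

End PartialSums.

Section Blocks.
Variable beta : seq nat.
Local Notation d := (sumn beta).
Local Notation R := (rpart beta).
Local Notation blk := (blk beta).

Lemma blk_le_size j : j <= d -> blk j <= size beta.
Proof.
move=> le_jd; have: has (fun l => j <= R l) (iota 0 (size beta).+1).
  by apply/hasP; exists (size beta); rewrite ?mem_iota ?rpart_oversize //= add0n.
by rewrite has_find size_iota.
Qed.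

Lemma blk_leE j l : j <= d -> (blk j <= l) = (j <= R l).
Proof.
move=> le_jd; have le_blk_size := blk_le_size le_jd.
apply/idP/idP => [le_blk_l|le_j_Rl].
  apply: leq_trans (rpart_mono beta le_blk_l).
  have has_j : has (fun l => j <= R l) (iota 0 (size beta).+1) by rewrite has_find size_iota.
  by have := nth_find 0 has_j; rewrite /blk nth_iota.
rewrite leqNgt; apply/negP => lt_l_blk.
by have := before_find 0 lt_l_blk; rewrite nth_iota ?le_j_Rl //; lia.
Qed.

Lemma leq_rpart_blk j : j <= d -> j <= R (blk j).
Proof. by move=> le_jd; rewrite -blk_leE. Qed.

Lemma blk_gtE j l : j <= d -> (l < blk j) = (R l < j).
Proof. by move=> le_jd; rewrite ltnNge blk_leE // -ltnNge. Qed.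

Lemma blk_gt0 j : 0 < j -> j <= d -> 0 < blk j.
Proof. by move=> j_gt0 le_jd; rewrite blk_gtE // rpart0. Qed.

Lemma ltn_rpart_pred_blk j : 0 < j -> j <= d -> R (blk j).-1 < j.
Proof.
move=> j_gt0 le_jd; rewrite -blk_gtE //.
by have := blk_gt0 j_gt0 le_jd; case: (blk j).
Qed.

Lemma blk_mono j j' : j <= j' -> j' <= d -> blk j <= blk j'.
Proof. by move=> le_jj' le_j'd; rewrite blk_leE ?(leq_trans le_jj') ?leq_rpart_blk. Qed.

End Blocks.

Definition top_cell beta j : nat * nat := (blk beta j, j).
Definition bot_cell beta j : nat * nat := ((blk beta j).+1, j).
Definition is_top beta (c : nat * nat) : bool := c.1 == blk beta c.2.
Definition is_cell beta (c : nat * nat) : bool :=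
  [&& 0 < c.2, c.2 <= sumn beta & (c.1 == blk beta c.2) || (c.1 == (blk beta c.2).+1)].

Lemma top_cell_inj beta : injective (top_cell beta).
Proof. by move=> j j' /(congr1 snd). Qed.

Lemma bot_cell_inj beta : injective (bot_cell beta).
Proof. by move=> j j' /(congr1 snd). Qed.

Section Cells.
Variable beta : seq nat.
Local Notation d := (sumn beta).
Local Notation blk := (blk beta).
Local Notation top := (top_cell beta).
Local Notation bot := (bot_cell beta).

Lemma mem_cellsS (c : nat * nat) : (c \in cellsS beta) = is_cell beta c.
Proof.
rewrite /cellsS mem_filter /inS /is_cell; apply/andP/and3P.
- case=> /hasP[l l_range cell_l] /allpairsP[[i j] [_ /= /[!mem_iota] j_range e_c]].
  subst c; move: l_range cell_l; rewrite mem_iota /=.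
  move=> /andP[l_gt0 _] /and4P[le_li le_il lt_Rj le_jR].
  have le_jd : j <= d by lia.
  have blk_j : blk j = l.
    by apply/anti_leq; rewrite blk_leE // le_jR -(prednK l_gt0) blk_gtE.
  by rewrite blk_j; split; [lia | lia | apply/orP; lia].
- case=> j_gt0 le_jd col_c; have := blk_le_size le_jd; have := blk_gt0 j_gt0 le_jd.
  have := leq_rpart_blk le_jd; have := ltn_rpart_pred_blk j_gt0 le_jd => ? ? ? ?.
  split.
  + apply/hasP; exists (blk c.2); first by rewrite mem_iota; lia.
    by apply/and4P; split => //; case/orP: col_c => /eqP ->.
  + rewrite [c]surjective_pairing; apply: allpairs_f; rewrite mem_iota; last lia.
    by case/orP: col_c => /eqP ->; lia.
Qed.

Lemma uniq_cellsS : uniq (cellsS beta).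
Proof.
rewrite /cellsS filter_uniq // allpairs_uniq ?iota_uniq //.
by move=> [a b] [a' b'] _ _ /= [-> ->].
Qed.

Lemma perm_cellsS :
  perm_eq (cellsS beta) ([seq top j | j <- iota 1 d] ++ [seq bot j | j <- iota 1 d]).
Proof.
apply: uniq_perm; first exact: uniq_cellsS.
  rewrite cat_uniq (map_inj_uniq (@top_cell_inj beta)) (map_inj_uniq (@bot_cell_inj beta)).
  rewrite iota_uniq andbT /=; apply/hasP => -[_ /mapP[j _ ->] /mapP[j' _]] /=.
  by rewrite /top_cell /bot_cell => -[+ e_jj']; rewrite e_jj'; lia.
move=> [i j]; rewrite mem_cellsS mem_cat /is_cell /=; apply/and3P/orP.
- case=> j_gt0 le_jd /orP[] /eqP ->; [left | right];
    by apply/mapP; exists j; rewrite ?mem_iota //; lia.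
- by case=> /mapP[j' + [-> ->]]; rewrite mem_iota eqxx ?orbT; split => //; lia.
Qed.

Lemma size_cellsS : size (cellsS beta) = 2 * d.
Proof. by rewrite (perm_size perm_cellsS) size_cat !size_map size_iota addnn mul2n. Qed.

End Cells.

Section Labels.
Variable beta : seq nat.
Local Notation d := (sumn beta).
Local Notation R := (rpart beta).
Local Notation blk := (blk beta).
Local Notation top := (top_cell beta).
Local Notation bot := (bot_cell beta).

Lemma nu_top j : nu beta (top j) = R (blk j).-1 + j.
Proof. by rewrite /nu /= subnn mul0n addn0. Qed.

Lemma nu_bot j : 0 < j -> j <= d -> nu beta (bot j) = R (blk j) + j.
Proof.
move=> j_gt0 le_jd; rewrite /nu /= subSnn mul1n addnAC /bpart -rpartS.
by rewrite prednK ?blk_gt0.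
Qed.

Lemma nu_top_lt u v : 0 < u -> u < v -> v <= d -> nu beta (top u) < nu beta (top v).
Proof.
move=> u_gt0 lt_uv le_vd; rewrite !nu_top.
have le_blk := blk_mono (ltnW lt_uv) le_vd.
have : R (blk u).-1 <= R (blk v).-1 by apply: rpart_mono; lia.
lia.
Qed.

Lemma nu_bot_lt u v : 0 < u -> u < v -> v <= d -> nu beta (bot u) < nu beta (bot v).
Proof.
move=> u_gt0 lt_uv le_vd; rewrite !nu_bot //; try lia.
have := rpart_mono beta (blk_mono (ltnW lt_uv) le_vd); lia.
Qed.

Lemma nu_top_bot_lt u v : 0 < u -> u <= d -> 0 < v -> v <= d -> blk u <= blk v ->
  nu beta (top u) < nu beta (bot v).
Proof.
move=> u_gt0 le_ud v_gt0 le_vd le_blk; rewrite nu_top nu_bot //.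
have := leq_rpart_blk le_ud; have := ltn_rpart_pred_blk v_gt0 le_vd.
have := rpart_mono beta le_blk.
have : R (blk u).-1 <= R (blk v).-1 by apply: rpart_mono; lia.
lia.
Qed.

Lemma nu_bot_top_lt u v : 0 < u -> u <= d -> 0 < v -> v <= d -> blk v < blk u ->
  nu beta (bot v) < nu beta (top u).
Proof.
move=> u_gt0 le_ud v_gt0 le_vd lt_blk; rewrite nu_top nu_bot //.
have := leq_rpart_blk le_vd; have := ltn_rpart_pred_blk u_gt0 le_ud.
have : R (blk v) <= R (blk u).-1 by apply: rpart_mono; lia.
lia.
Qed.

Lemma nu_top_neq_bot u v : 0 < u -> u <= d -> 0 < v -> v <= d ->
  nu beta (top u) != nu beta (bot v).
Proof.
move=> u_gt0 le_ud v_gt0 le_vd; case: (leqP (blk u) (blk v)) => [le_blk | lt_blk].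
  by rewrite neq_ltn nu_top_bot_lt.
by rewrite neq_ltn nu_bot_top_lt ?orbT.
Qed.

End Labels.

Section Paths.
Variable p : seq bool.

Lemma nupsS k : k < size p -> nups p k.+1 = nups p k + nth false p k.
Proof. by move=> lt_k; rewrite /nups (take_nth false lt_k) -cats1 count_cat /=; case: nth. Qed.

Lemma ndownsS k : k < size p -> ndowns p k.+1 = ndowns p k + ~~ nth false p k.
Proof. by move=> lt_k; rewrite /ndowns (take_nth false lt_k) -cats1 count_cat /=; case: nth. Qed.

Lemma step_up k : k < size p -> nth false p k ->
  nups p k.+1 = (nups p k).+1 /\ ndowns p k.+1 = ndowns p k.
Proof. by move=> lt_k up_k; rewrite nupsS ?ndownsS // up_k addn1 addn0. Qed.

Lemma step_down k : k < size p -> ~~ nth false p k ->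
  nups p k.+1 = nups p k /\ ndowns p k.+1 = (ndowns p k).+1.
Proof. by move=> lt_k down_k; rewrite nupsS ?ndownsS // (negbTE down_k) addn1 addn0. Qed.

Lemma nups_mono : {homo nups p : k k' / k <= k'}.
Proof. by move=> k k' /subnKC <-; rewrite /nups takeD count_cat leq_addr. Qed.

Lemma ndowns_mono : {homo ndowns p : k k' / k <= k'}.
Proof. by move=> k k' /subnKC <-; rewrite /ndowns takeD count_cat leq_addr. Qed.

Lemma nups_ndowns k : k <= size p -> nups p k + ndowns p k = k.
Proof. by move=> le_k; rewrite /nups /ndowns count_predC size_takel. Qed.

Lemma nups_oversize k : size p <= k -> nups p k = nups p (size p).
Proof. by move=> le_size_k; rewrite /nups !take_oversize. Qed.

Lemma ndowns_oversize k : size p <= k -> ndowns p k = ndowns p (size p).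
Proof. by move=> le_size_k; rewrite /ndowns !take_oversize. Qed.

Lemma valleyE k : 0 < k < size p -> valley p k = ~~ nth false p k.-1 && nth false p k.
Proof. by case/andP=> k_gt0 lt_k; rewrite /valley k_gt0 lt_k (set_nth_default false) //; lia. Qed.

Lemma valley_steps k : 0 < k < size p -> valley p k ->
  [/\ ~~ nth false p k.-1, nth false p k,
      ndowns p k = (ndowns p k.-1).+1 & nups p k.+1 = (nups p k).+1].
Proof.
move=> k_range; have lt_pred : k.-1 < size p by lia.
have e_pred : k.-1.+1 = k by lia.
rewrite valleyE // => /andP[down_pred up_k]; split=> //.
  by have [_] := step_down lt_pred down_pred; rewrite e_pred.
by have [] := step_up (_ : k < size p) up_k; case/andP: k_range.
Qed.

End Paths.

Section DyckPaths.
Variables (d : nat) (p : seq bool).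
Hypothesis dyck_p : dyck d p.

Lemma size_dyck : size p = 2 * d.
Proof. by case/and3P: dyck_p => /eqP. Qed.

Lemma dyck_above k : ndowns p k <= nups p k.
Proof.
case/and3P: dyck_p => _ /allP above _; case: (leqP k (2 * d)) => [le_k | /ltnW lt_k].
  by apply: above; rewrite mem_iota.
by rewrite nups_oversize ?ndowns_oversize size_dyck // above // mem_iota; lia.
Qed.

Lemma dyck_end : nups p (2 * d) = d /\ ndowns p (2 * d) = d.
Proof.
case/and3P: dyck_p => _ _ /eqP balanced.
by have := nups_ndowns (p := p) (k := 2 * d); rewrite size_dyck leqnn => /(_ isT); lia.
Qed.

Lemma dyck_nups_le k : nups p k <= d.
Proof.
case: dyck_end => nups_end _; case: (leqP k (2 * d)) => [le_k | /ltnW lt_k].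
  by rewrite -nups_end nups_mono.
by rewrite nups_oversize size_dyck ?nups_end.
Qed.

Lemma dyck_ndowns_le k : ndowns p k <= d.
Proof.
case: dyck_end => _ ndowns_end; case: (leqP k (2 * d)) => [le_k | /ltnW lt_k].
  by rewrite -ndowns_end ndowns_mono.
by rewrite ndowns_oversize size_dyck ?ndowns_end.
Qed.

Lemma dyck_return x : 0 < x < d -> nups p (2 * x) = x -> ndowns p (2 * x) = x ->
  is_return p (2 * x).
Proof.
move=> x_range nups_x ndowns_x.
have lt_pred : (2 * x).-1 < size p by rewrite size_dyck; lia.
have lt_x : 2 * x < size p by rewrite size_dyck; lia.
have e_pred : (2 * x).-1.+1 = 2 * x by lia.
rewrite /is_return /valley nups_x ndowns_x eqxx andbT lt_x (set_nth_default false true) //.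
apply/and4P; split => //; first lia.
- apply/negP => up_pred; have := dyck_above (2 * x).-1.
  by case: (step_up lt_pred up_pred); rewrite e_pred nups_x ndowns_x; lia.
- apply/negPn/negP => down_x; have := dyck_above (2 * x).+1.
  by case: (step_down lt_x down_x); rewrite nups_x ndowns_x; lia.
Qed.

End DyckPaths.

Definition step_cell beta (p : seq bool) k : nat * nat :=
  if nth false p k then top_cell beta (nups p k.+1) else bot_cell beta (ndowns p k.+1).

Definition path_cells beta (p : seq bool) : seq (nat * nat) :=
  mkseq (step_cell beta p) (size p).

Section PathCells.
Variables (beta : seq nat) (p : seq bool).
Local Notation d := (sumn beta).
Local Notation R := (rpart beta).
Local Notation blk := (blk beta).
Hypothesis p_Ed : inEd d (rlist beta) p.

Lemma dyck_Ed : dyck d p.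
Proof. by case/andP: p_Ed. Qed.

Lemma rlist_return x : x \in rlist beta -> nups p (2 * x) = x /\ ndowns p (2 * x) = x.
Proof.
case/andP: p_Ed => _ /allP returns /returns /andP[/and4P[_ lt_size _ _] /eqP balanced].
by have := nups_ndowns (ltnW lt_size); lia.
Qed.

Lemma return_between u v : 0 < v -> v <= d -> u <= d -> blk v < blk u ->
  exists2 x, x \in rlist beta & v <= x < u.
Proof.
move=> v_gt0 le_vd le_ud lt_blk; exists (R (blk v)); last first.
  by rewrite leq_rpart_blk //= -blk_gtE.
apply/mapP; exists (blk v) => //; rewrite mem_iota blk_gt0 //=.
by have := blk_le_size le_ud; lia.
Qed.

Lemma blk_nups_le_ndowns b a : b < a -> a < 2 * d -> ~~ nth false p a ->
  blk (nups p b.+1) <= blk (ndowns p a.+1).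
Proof.
move=> lt_ba lt_a down_a; rewrite leqNgt; apply/negP => lt_blk.
have [_ ndowns_a] := step_down (leq_trans lt_a (eq_leq (esym (size_dyck dyck_Ed)))) down_a.
have v_gt0 : 0 < ndowns p a.+1 by rewrite ndowns_a.
have [x /rlist_return[nups_x ndowns_x] /andP[le_vx lt_xu]] :=
  return_between v_gt0 (dyck_ndowns_le dyck_Ed _) (dyck_nups_le dyck_Ed _) lt_blk.
(* The path returns to the axis at 2 x, which would have to lie between steps b and a. *)
case: (leqP b.+1 (2 * x)) => [/(nups_mono p)|lt_xb]; first lia.
have /(ndowns_mono p) : 2 * x <= a by lia.
lia.
Qed.

Lemma size_path_cells : size (path_cells beta p) = 2 * d.
Proof. by rewrite size_mkseq (size_dyck dyck_Ed). Qed.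

Lemma nth_path_cells k : k < 2 * d -> nth (0, 0) (path_cells beta p) k = step_cell beta p k.
Proof. by move=> lt_k; rewrite nth_mkseq // (size_dyck dyck_Ed). Qed.

Lemma step_cell_order a b : a < 2 * d -> b < 2 * d ->
  leS (step_cell beta p a) (step_cell beta p b) -> a <= b.
Proof.
move=> lt_a2d lt_b2d le_cells; case: leqP => // lt_ba; move: le_cells.
have lt_a : a < size p by rewrite (size_dyck dyck_Ed).
have := nups_mono p lt_ba; have := ndowns_mono p lt_ba; have := dyck_above dyck_Ed a.
rewrite /step_cell /leS; case: (boolP (nth false p a)) => [up_a | down_a].
  by have [-> _] := step_up lt_a up_a; case: ifP => _ /=; lia.
have := blk_nups_le_ndowns lt_ba lt_a2d down_a.
by have [_ ->] := step_down lt_a down_a; case: ifP => _ /=; lia.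
Qed.

Lemma uniq_path_cells : uniq (path_cells beta p).
Proof.
apply/(uniqP (0, 0)) => a b; rewrite !inE size_path_cells => lt_a lt_b.
rewrite !nth_path_cells // => e_cells.
by apply/anti_leq/andP; split; apply: step_cell_order; rewrite ?e_cells // /leS !leqnn.
Qed.

Lemma step_cell_is_cell k : k < 2 * d -> is_cell beta (step_cell beta p k).
Proof.
rewrite -(size_dyck dyck_Ed) => lt_k; rewrite /is_cell /step_cell.
have := dyck_nups_le dyck_Ed k.+1; have := dyck_ndowns_le dyck_Ed k.+1.
case: (boolP (nth false p k)) => [up_k | down_k] /=.
  by have [-> _] := step_up lt_k up_k; rewrite eqxx /= => _ ->.
by have [_ ->] := step_down lt_k down_k; rewrite eqxx orbT /= => -> _.
Qed.

Lemma perm_path_cells : perm_eq (path_cells beta p) (cellsS beta).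
Proof.
apply: uniq_perm; rewrite ?uniq_path_cells ?uniq_cellsS //.
have sub_cells : {subset path_cells beta p <= cellsS beta}.
  move=> c /(nthP (0, 0))[k]; rewrite size_path_cells => lt_k <-.
  by rewrite mem_cellsS nth_path_cells // step_cell_is_cell.
have [] // := uniq_min_size uniq_path_cells sub_cells.
by rewrite size_cellsS size_path_cells.
Qed.

Lemma path_cells_linext : is_linext beta (path_cells beta p).
Proof.
apply/allP => a; rewrite mem_iota size_path_cells => lt_a; apply/allP => b.
rewrite mem_iota => lt_b; apply/implyP; rewrite !nth_path_cells; try lia.
by apply: step_cell_order; lia.
Qed.

End PathCells.

Lemma filter_take T (P : pred T) (s : seq T) k :
  filter P (take k s) = take (count P (take k s)) (filter P s).
Proof. by rewrite -{3}(cat_take_drop k s) filter_cat take_size_cat // size_filter. Qed.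

Lemma count_take T (P : pred T) (s : seq T) k : count P (take k s) <= count P s.
Proof. by rewrite -{2}(cat_take_drop k s) count_cat leq_addr. Qed.

Definition linext_path beta (s : seq (nat * nat)) : seq bool := map (is_top beta) s.

Section LinearExtensions.
Variables (beta : seq nat) (s : seq (nat * nat)).
Local Notation d := (sumn beta).
Local Notation R := (rpart beta).
Local Notation blk := (blk beta).
Local Notation top := (top_cell beta).
Local Notation bot := (bot_cell beta).
Hypotheses (perm_s : perm_eq s (cellsS beta)) (linext_s : is_linext beta s).

Lemma uniq_linext : uniq s.
Proof. by rewrite (perm_uniq perm_s) uniq_cellsS. Qed.

Lemma size_linext : size s = 2 * d.
Proof. by rewrite (perm_size perm_s) size_cellsS. Qed.

Lemma mem_linext c : (c \in s) = is_cell beta c.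
Proof. by rewrite (perm_mem perm_s) mem_cellsS. Qed.

Lemma linext_le a b : a < size s -> b < size s -> leS (nth (0, 0) s a) (nth (0, 0) s b) -> a <= b.
Proof.
move=> lt_a lt_b; move/allP: linext_s => /(_ a); rewrite mem_iota => /(_ lt_a) /allP /(_ b).
by rewrite mem_iota => /(_ lt_b) /implyP.
Qed.

Lemma mem_take_linext c c' k : c \in s -> c' \in s -> leS c c' -> c' \in take k s -> c \in take k s.
Proof.
move=> s_c s_c' le_cc'; rewrite !in_take //; apply: leq_ltn_trans.
by apply: linext_le; rewrite ?index_mem ?nth_index.
Qed.

Lemma top_in_linext j : 0 < j -> j <= d -> top j \in s.
Proof. by move=> j_gt0 le_jd; rewrite mem_linext /is_cell /= j_gt0 le_jd eqxx. Qed.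

Lemma bot_in_linext j : 0 < j -> j <= d -> bot j \in s.
Proof. by move=> j_gt0 le_jd; rewrite mem_linext /is_cell /= j_gt0 le_jd eqxx orbT. Qed.

Lemma sorted_filter_linext (P : pred (nat * nat)) :
  {in s &, forall c c', P c -> P c' -> c'.2 <= c.2 -> leS c' c} ->
  sorted (relpre snd ltn) (filter P s).
Proof.
move=> col_order; rewrite sorted_pairwise; last exact: relpre_trans ltn_trans.
have: pairwise (fun c c' => P c ==> P c' ==> (c.2 < c'.2)) s.
  apply/(pairwiseP (0, 0)) => a b; rewrite !inE => lt_a lt_b lt_ab.
  apply/implyP => Pa; apply/implyP => Pb; rewrite ltnNge; apply/negP => le_col.
  have := linext_le lt_b lt_a (col_order _ _ (mem_nth _ lt_a) (mem_nth _ lt_b) Pa Pb le_col).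
  by rewrite leqNgt lt_ab.
move=> /(pairwise_filter P); apply: (sub_in_pairwise (P := P)) => [c c' Pc Pc' /=|].
  by rewrite -!topredE /= in Pc Pc'; rewrite Pc Pc'.
by apply/allP => c; rewrite mem_filter => /andP[].
Qed.

Lemma filter_top_linext : filter (is_top beta) s = map top (iota 1 d).
Proof.
apply: (irr_sorted_eq (relpre_trans ltn_trans) (fun c => ltnn c.2)).
- apply: sorted_filter_linext => c c'; rewrite !mem_linext /is_top.
  move=> /and3P[_ le_cd _] _ /eqP blk_c /eqP blk_c' le_col.
  by rewrite /leS blk_c blk_c' le_col andbT blk_mono.
- by rewrite sorted_map; apply: iota_ltn_sorted.
- move=> [i j]; rewrite mem_filter mem_linext /is_cell /is_top /=; apply/idP/mapP.
    by case/andP=> /eqP-> /and3P[j_gt0 le_jd _]; exists j => //; rewrite mem_iota; lia.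
  by case=> j' /[!mem_iota] j_range [-> ->]; rewrite eqxx /=; lia.
Qed.

Lemma filter_bot_linext : filter (predC (is_top beta)) s = map bot (iota 1 d).
Proof.
apply: (irr_sorted_eq (relpre_trans ltn_trans) (fun c => ltnn c.2)).
- apply: sorted_filter_linext => c c'; rewrite !mem_linext /is_cell /is_top /=.
  move=> /and3P[_ le_cd /orP[-> //|/eqP blk_c]] /and3P[_ _ /orP[-> //|/eqP blk_c']] _ _ le_col.
  by rewrite /leS blk_c blk_c' le_col andbT ltnS blk_mono.
- by rewrite sorted_map; apply: iota_ltn_sorted.
- move=> [i j]; rewrite mem_filter mem_linext /is_cell /is_top /=; apply/idP/mapP.
    case/andP=> /negbTE top_ij /and3P[j_gt0 le_jd]; rewrite top_ij => /eqP->.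
    by exists j => //; rewrite mem_iota; lia.
  case=> j' /[!mem_iota] j_range [-> ->]; rewrite eqxx orbT andbT.
  by apply/andP; split; [rewrite eqn_leq ltnn | lia].
Qed.

Local Notation D := (linext_path beta s).

Lemma size_linext_path : size D = 2 * d.
Proof. by rewrite size_map size_linext. Qed.

Lemma nups_linext_path k : nups D k = count (is_top beta) (take k s).
Proof. by rewrite /nups -map_take count_map. Qed.

Lemma ndowns_linext_path k : ndowns D k = count (predC (is_top beta)) (take k s).
Proof. by rewrite /ndowns -map_take count_map. Qed.

Lemma nups_linext_path_le k : nups D k <= d.
Proof.
rewrite nups_linext_path (leq_trans (count_take _ _ _)) // -size_filter.
by rewrite filter_top_linext size_map size_iota.
Qed.

Lemma ndowns_linext_path_le k : ndowns D k <= d.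
Proof.
rewrite ndowns_linext_path (leq_trans (count_take _ _ _)) // -size_filter.
by rewrite filter_bot_linext size_map size_iota.
Qed.

Lemma mem_take_top j k : 0 < j -> j <= d -> (top j \in take k s) = (j <= nups D k).
Proof.
move=> j_gt0 le_jd; have := nups_linext_path_le k.
have -> : (top j \in take k s) = (top j \in filter (is_top beta) (take k s)).
  by rewrite mem_filter /is_top eqxx.
rewrite filter_take filter_top_linext -nups_linext_path -map_take take_iota.
by rewrite (mem_map (@top_cell_inj beta)) mem_iota; lia.
Qed.

Lemma mem_take_bot j k : 0 < j -> j <= d -> (bot j \in take k s) = (j <= ndowns D k).
Proof.
move=> j_gt0 le_jd; have := ndowns_linext_path_le k.
have -> : (bot j \in take k s) = (bot j \in filter (predC (is_top beta)) (take k s)).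
  by rewrite mem_filter /is_top /= eqn_leq ltnn.
rewrite filter_take filter_bot_linext -ndowns_linext_path -map_take take_iota.
by rewrite (mem_map (@bot_cell_inj beta)) mem_iota; lia.
Qed.

Lemma linext_pathK : path_cells beta D = s.
Proof.
apply: (@eq_from_nth _ (0, 0)); first by rewrite size_mkseq size_map.
rewrite size_mkseq size_map => k lt_k; rewrite nth_mkseq ?size_map // /step_cell.
have lt_kD : k < size D by rewrite size_map.
have nth_D : nth false D k = is_top beta (nth (0, 0) s k) by rewrite (nth_map (0, 0)).
have index_k : index (nth (0, 0) s k) s = k by rewrite index_uniq ?uniq_linext.
have in_next : nth (0, 0) s k \in take k.+1 s by rewrite in_take ?mem_nth ?index_k.
have notin_prev : nth (0, 0) s k \notin take k s by rewrite in_take ?mem_nth ?index_k ?ltnn.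
have := nupsS lt_kD; have := ndownsS lt_kD; have := mem_nth (0, 0) lt_k.
move: in_next notin_prev; rewrite nth_D mem_linext.
case: (nth (0, 0) s k) => i j; rewrite /is_cell /is_top /=.
move=> in_next notin_prev /and3P[j_gt0 le_jd col_ij].
case: (i =P blk j) col_ij => [e_i _ | _ /eqP e_i] /=; subst i.
  rewrite -/(top_cell beta j) !mem_take_top // in in_next notin_prev.
  by move=> _ nups_next; congr top_cell; lia.
rewrite -/(bot_cell beta j) !mem_take_bot // in in_next notin_prev.
by move=> ndowns_next _; congr bot_cell; lia.
Qed.

Lemma linext_path_above k : ndowns D k <= nups D k.
Proof.
have [-> // | v_gt0] := posnP (ndowns D k).
have le_vd := ndowns_linext_path_le k.
have bot_in : bot (ndowns D k) \in take k s by rewrite mem_take_bot.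
have le_top_bot : leS (top (ndowns D k)) (bot (ndowns D k)) by rewrite /leS /= leqnSn leqnn.
have := mem_take_linext (top_in_linext v_gt0 le_vd) (bot_in_linext v_gt0 le_vd) le_top_bot bot_in.
by rewrite mem_take_top.
Qed.

Lemma dyck_linext_path : dyck d D.
Proof.
have ends : nups D (2 * d) = d /\ ndowns D (2 * d) = d.
  rewrite nups_linext_path ndowns_linext_path take_oversize ?size_linext //.
  by rewrite -!size_filter filter_top_linext filter_bot_linext !size_map size_iota.
rewrite /dyck size_linext_path ends.1 ends.2 !eqxx andbT andTb.
by apply/allP => k _; apply: linext_path_above.
Qed.

Hypothesis pos_beta : all (fun b => 0 < b) beta.

Lemma linext_path_return x : x \in rlist beta -> is_return D (2 * x).
Proof.
case/mapP => l /[!mem_iota] l_range ->.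
have x_gt0 : 0 < R l by rewrite -(rpart0 beta) rpart_lt //; lia.
have lt_xd : R l < d by rewrite -(rpart_oversize (leqnn _)) rpart_lt //; lia.
have blk_x : blk (R l) <= l by rewrite blk_leE // ltnW.
have blk_next : l < blk (R l).+1 by rewrite blk_gtE.
have sum_x : nups D (2 * R l) + ndowns D (2 * R l) = 2 * R l.
  by apply: nups_ndowns; rewrite size_linext_path; lia.
have top_next := top_in_linext (ltn0Sn (R l)) lt_xd.
have bot_next := bot_in_linext (ltn0Sn (R l)) lt_xd.
have nups_x : nups D (2 * R l) <= R l.
  rewrite leqNgt; apply/negP => lt_x_nups.
  have top_in : top (R l).+1 \in take (2 * R l) s by rewrite mem_take_top.
  have le_bot_top : leS (bot (R l)) (top (R l).+1) by rewrite /leS /= leqnSn andbT; lia.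
  have := mem_take_linext (bot_in_linext x_gt0 (ltnW lt_xd)) top_next le_bot_top top_in.
  by rewrite mem_take_bot //; lia.
have ndowns_x : ndowns D (2 * R l) <= R l.
  rewrite leqNgt; apply/negP => lt_x_ndowns.
  have bot_in : bot (R l).+1 \in take (2 * R l) s by rewrite mem_take_bot.
  have le_top_bot : leS (top (R l).+1) (bot (R l).+1) by rewrite /leS /= leqnSn leqnn.
  by have := mem_take_linext top_next bot_next le_top_bot bot_in; rewrite mem_take_top //; lia.
by apply: (dyck_return dyck_linext_path); lia.
Qed.

Lemma linext_path_Ed : inEd d (rlist beta) D.
Proof. by rewrite /inEd dyck_linext_path; apply/allP => x /linext_path_return. Qed.

End LinearExtensions.

Definition path_word beta (p : seq bool) : seq nat := map (nu beta) (path_cells beta p).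

Definition marked_returns beta : seq nat := [seq 2 * x | x <- rlist beta].

Section Descents.
Variables (beta : seq nat) (p : seq bool).
Local Notation d := (sumn beta).
Local Notation blk := (blk beta).
Local Notation w := (path_word beta p).
Hypothesis p_Ed : inEd d (rlist beta) p.

Lemma size_path_word : size w = 2 * d.
Proof. by rewrite size_map size_path_cells. Qed.

Lemma nth_path_word k : k < 2 * d -> nth 0 w k = nu beta (step_cell beta p k).
Proof. by move=> lt_k; rewrite (nth_map (0, 0)) ?nth_path_cells ?size_path_cells. Qed.

Lemma ascent_off_valley k : 0 < k < 2 * d -> ~~ valley p k -> nth 0 w k.-1 < nth 0 w k.
Proof.
move=> k_range; have lt_k : k < size p by rewrite (size_dyck (dyck_Ed p_Ed)); lia.
have lt_pred : k.-1 < size p by lia.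
have e_pred : k.-1.+1 = k by lia.
rewrite valleyE ?lt_k ?(andP k_range).1 // !nth_path_word; try lia.
have le_u := dyck_nups_le (dyck_Ed p_Ed) k.+1.
have le_v := dyck_ndowns_le (dyck_Ed p_Ed) k.+1.
rewrite /step_cell e_pred; case: (boolP (nth false p k.-1)) => [up_pred | down_pred] /=.
- have [nups_k _] := step_up lt_pred up_pred; rewrite e_pred in nups_k.
  case: (boolP (nth false p k)) => [up_k | down_k] _.
    by have [nups_next _] := step_up lt_k up_k; rewrite nups_next; apply: nu_top_lt; lia.
  have [nups_next ndowns_next] := step_down lt_k down_k.
  have lt_pred_k : k.-1 < k by lia.
  have := blk_nups_le_ndowns p_Ed lt_pred_k (andP k_range).2 down_k.
  by rewrite e_pred => le_blk; apply: nu_top_bot_lt; lia.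
- move=> /negbTE down_k; rewrite down_k.
  have [_ ndowns_k] := step_down lt_pred down_pred; rewrite e_pred in ndowns_k.
  have [_ ndowns_next] := step_down lt_k (negbT down_k).
  by rewrite ndowns_next; apply: nu_bot_lt; lia.
Qed.

Lemma valley_marked k : 0 < k < 2 * d -> valley p k ->
  (k \in marked_returns beta) = (blk (ndowns p k) < blk (nups p k.+1)).
Proof.
move=> k_range valley_k; rewrite -(size_dyck (dyck_Ed p_Ed)) in k_range.
have [_ _ ndowns_k nups_next] := valley_steps k_range valley_k.
have le_u := dyck_nups_le (dyck_Ed p_Ed) k.+1.
apply/mapP/idP => [[x x_r e_k] | lt_blk].
  have [nups_x ndowns_x] := rlist_return p_Ed x_r; rewrite -e_k in nups_x ndowns_x.
  case/mapP: x_r => l /[!mem_iota] l_range e_x.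
  have blk_x : blk x <= l by rewrite blk_leE e_x //; lia.
  have blk_next : l < blk x.+1 by rewrite blk_gtE; lia.
  rewrite nups_next ndowns_x nups_x; lia.
have v_gt0 : 0 < ndowns p k by rewrite ndowns_k.
have [x x_r /andP[le_vx lt_xu]] :=
  return_between p_Ed v_gt0 (dyck_ndowns_le (dyck_Ed p_Ed) k) le_u lt_blk.
have [nups_x ndowns_x] := rlist_return p_Ed x_r.
exists x => //; apply/anti_leq/andP; split; rewrite leqNgt; apply/negP => lt_ends.
- have /(ndowns_mono p) : 2 * x <= k.-1 by lia.
  lia.
- have /(nups_mono p) : k.+1 <= 2 * x by lia.
  lia.
Qed.

Lemma descent_path_word k : 0 < k < 2 * d ->
  (nth 0 w k < nth 0 w k.-1) = valley p k && (k \notin marked_returns beta).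
Proof.
move=> k_range; case: (boolP (valley p k)) => [valley_k | not_valley] /=; last first.
  by apply/negbTE; rewrite -leqNgt ltnW // ascent_off_valley.
have k_range' : 0 < k < size p by rewrite (size_dyck (dyck_Ed p_Ed)).
have [down_pred up_k ndowns_k nups_next] := valley_steps k_range' valley_k.
have le_u := dyck_nups_le (dyck_Ed p_Ed) k.+1.
have le_v := dyck_ndowns_le (dyck_Ed p_Ed) k.
have lt_pred : k.-1 < 2 * d by lia.
rewrite (valley_marked k_range valley_k) !nth_path_word ?(andP k_range).2 //.
rewrite /step_cell (negbTE down_pred) up_k prednK ?(andP k_range).1 //.
case: (ltnP (blk (ndowns p k)) (blk (nups p k.+1))) => [lt_blk | le_blk] /=.
  by apply/negbTE; rewrite -leqNgt ltnW // nu_bot_top_lt //; lia.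
by apply: nu_top_bot_lt; lia.
Qed.

Lemma marked_return_valley k : k \in marked_returns beta -> valley p k.
Proof. by case/mapP=> x x_r ->; case/andP: p_Ed => _ /allP /(_ x x_r) /andP[]. Qed.

Hypothesis pos_beta : all (fun b => 0 < b) beta.

Lemma sum_marked_returns :
  \sum_(0 <= k < 2 * d | valley p k && (k \in marked_returns beta)) k = 2 * sumn (rlist beta).
Proof.
rewrite (eq_bigl (fun k => k \in marked_returns beta)) => [|k]; last first.
  by case: (boolP (k \in _)) => [/marked_return_valley -> | _]; rewrite ?andbF.
rewrite -big_filter (perm_big (marked_returns beta)); last first.
  have inj_double : injective (muln 2) by move=> x y; lia.
  apply: uniq_perm; first by rewrite filter_uniq ?iota_uniq.
    by rewrite (map_inj_uniq inj_double) uniq_rlist.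
  move=> k; rewrite mem_filter mem_index_iota andb_idr // => /marked_return_valley.
  by rewrite /valley (size_dyck (dyck_Ed p_Ed)) => /and4P[].
by rewrite /marked_returns big_map sumnE big_distrr.
Qed.

Lemma maj_path_word : maj w = majD p - 2 * sumn (rlist beta).
Proof.
suff -> : majD p = maj w + 2 * sumn (rlist beta) by rewrite addnK.
rewrite /majD /maj size_path_word (size_dyck (dyck_Ed p_Ed)) (bigID (mem (marked_returns beta))).
rewrite /= sum_marked_returns addnC [in RHS](big_nat_widenl 1 0) //; congr (_ + _).
apply: congr_big_nat => // k /andP[_ lt_k].
have [-> | k_gt0] := posnP k; first by rewrite /valley ltnn andbF.
by rewrite descent_path_word ?k_gt0 ?lt_k ?andbT.
Qed.

End Descents.

Lemma path_word_inj beta p p' :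
  inEd (sumn beta) (rlist beta) p -> inEd (sumn beta) (rlist beta) p' ->
  path_word beta p = path_word beta p' -> p = p'.
Proof.
move=> p_Ed p'_Ed e_words; have size_p := size_dyck (dyck_Ed p_Ed).
apply: (@eq_from_nth _ false) => [|k]; first by rewrite size_p (size_dyck (dyck_Ed p'_Ed)).
rewrite size_p => lt_k; have := congr1 (nth 0 ^~ k) e_words; rewrite !nth_path_word //.
have := step_cell_is_cell p_Ed lt_k; have := step_cell_is_cell p'_Ed lt_k.
rewrite /step_cell /is_cell.
case: (nth false p k); case: (nth false p' k) => //= /and3P[? ? _] /and3P[? ? _].
  by move/eqP; rewrite (negbTE (nu_top_neq_bot _ _ _ _)).
by move/eqP; rewrite eq_sym (negbTE (nu_top_neq_bot _ _ _ _)).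
Qed.

Lemma perm_linext_perms beta : all (fun b => 0 < b) beta ->
  perm_eq (linext_perms beta)
    [seq path_word beta (val D) | D <- enum [pred D : (2 * sumn beta).-tuple bool
                                             | inEd (sumn beta) (rlist beta) D]].
Proof.
move=> pos_beta; apply: uniq_perm; first exact: undup_uniq.
  rewrite map_inj_in_uniq ?enum_uniq // => D D' /[!mem_enum] D_Ed D'_Ed.
  by move/(path_word_inj D_Ed D'_Ed)/val_inj.
move=> w; rewrite mem_undup; apply/mapP/mapP.
  case=> s /[!mem_filter] /andP[linext_s /[!mem_permutations] perm_s] ->.
  exists (Tuple (introT eqP (size_linext_path perm_s))).
    by rewrite mem_enum inE linext_path_Ed.
  by rewrite /path_word /= linext_pathK.
case=> D /[!mem_enum] D_Ed ->; exists (path_cells beta D) => //.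
by rewrite mem_filter mem_permutations path_cells_linext ?perm_path_cells.
Qed.

Local Open Scope ring_scope.

Theorem proposition3p8 (beta : seq nat) (d : nat) :
  all (fun b => 0 < b)%N beta -> sumn beta = d ->
  \sum_(w <- linext_perms beta) 'X^(maj w)
  = \sum_(D : (2 * d)%N.-tuple bool | inEd d (rlist beta) D)
       'X^(majD D - 2 * sumn (rlist beta))%N :> {poly int}.
Proof.
move=> pos_beta <-; rewrite (perm_big _ (perm_linext_perms pos_beta)) big_map big_enum /=.
by apply: eq_big => [D | D D_Ed]; rewrite ?inE // maj_path_word.
Qed.
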